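(* Let the data $(I,1,c,\{h_a\},S,\{d_a\},\{\chi_a\})$ be as in the context, fix $a\in I$ and an integer $n\ge1$. For $x,y>0$ define $$\mathcal{T}_a(n;x,y)=\frac{\chi_a\!\left(ix+\tfrac1n\right)\,\chi_a\!\left(iy-\tfrac1n\right)}{\chi_a(ix)\,\chi_a(iy)},\qquad \zeta_{n,a}:=\sum_{b\in I}S_{ab}\,d_b\,\theta_b^n .$$ Assume $\zeta_{n,a}\neq0$. Then as $x\to\infty$ and $y\to0^+$ (independently), $\mathcal{T}_a(n;x,y)\ne 0$ eventually and $$\frac{\mathcal{T}_a(n;x,y)}{|\mathcal{T}_a(n;x,y)|}\;\longrightarrow\;e^{\frac{2\pi i}{n}h_a-2\pi i\left(\frac2n+n\right)\frac{c}{24}}\;\frac{\zeta_{n,a}}{|\zeta_{n,a}|},$$ i.e. $\mathcal{T}_a(n;x,y)$ is asymptotically a positive real multiple of $e^{\frac{2\pi i}{n}h_a-2\pi i(\frac2n+n)\frac{c}{24}}\,\zeta_{n,a}$.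
   Context: Data: $I$ is a finite index set with a distinguished element $1$. $c\in\mathbb{R}$. Real numbers $h_a$ ($a\in I$) with $h_1=0$ and $h_a>0$ for $a\neq 1$; set $\theta_a=e^{2\pi i h_a}$. Positive reals $d_a$ ($a\in I$) and $\mathcal{D}=\sqrt{\sum_a d_a^2}$. $S=(S_{ab})_{a,b\in I}$ is a complex matrix with $S_{a1}=S_{1a}=d_a/\mathcal{D}$ for all $a$. The functions $\chi_a$ ($a\in I$) are holomorphic on the upper half-plane $\mathbb{H}$ and have absolutely convergent expansions $\chi_a(\tau)=\sum_{k\ge 0}N_{a,k}\,e^{2\pi i\tau(h_a-c/24+k)}$ with nonnegative integers $N_{a,k}$, $N_{a,0}\ge1$ and $N_{1,0}=1$; they satisfy the modular covariance $\chi_a(-1/\tau)=\sum_b S_{ab}\chi_b(\tau)$ and $\chi_a(\tau+1)=e^{2\pi i(h_a-c/24)}\chi_a(\tau)$ for all $\tau\in\mathbb{H}$. For $a=1$ one has $\zeta_{n,1}=\mathcal{D}^{-1}\sum_b d_b^2\theta_b^n$. *)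

From Stdlib Require Import Reals.
From Coquelicot Require Import Coquelicot.
Open Scope R_scope.

Fixpoint csum (f : nat -> C) (n : nat) : C :=
  match n with O => RtoC 0 | S m => Cplus (csum f m) (f m) end.
Fixpoint rsum (f : nat -> R) (n : nat) : R :=
  match n with O => 0 | S m => rsum f m + f m end.

(* e2pi z = exp(2 pi i z) for complex z, written out *)
Definition e2pi (z : C) : C :=
  (exp (-(2*PI*Im z)) * cos (2*PI*Re z), exp (-(2*PI*Im z)) * sin (2*PI*Re z)).

Definition holo_on_H (f : C -> C) : Prop :=
  forall z : C, 0 < Im z -> ex_derive (K := C_AbsRing) (V := C_NormedModule) f z.

(* index set I = {0,...,NI-1}; the distinguished element "1" is index 0 *)
Definition Dtot (NI : nat) (d : nat -> R) : R := sqrt (rsum (fun b => d b ^ 2) NI).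

Definition zeta (NI : nat) (S : nat -> nat -> C) (d : nat -> R) (h : nat -> R)
  (n : nat) (a : nat) : C :=
  csum (fun b => Cmult (Cmult (S a b) (RtoC (d b))) (e2pi (RtoC (INR n * h b)))) NI.

Definition Tfun (chi : nat -> C -> C) (a n : nat) (x y : R) : C :=
  Cdiv (Cmult (chi a (1 / INR n, x)) (chi a (- (1 / INR n), y)))
       (Cmult (chi a (0, x)) (chi a (0, y))).

Definition RCFT_data (NI : nat) (c : R) (h : nat -> R) (d : nat -> R)
  (S : nat -> nat -> C) (chi : nat -> C -> C) (Nc : nat -> nat -> nat) : Prop :=
  (0 < NI)%nat /\
  h 0%nat = 0 /\ (forall a, (0 < a < NI)%nat -> 0 < h a) /\
  (forall a, (a < NI)%nat -> 0 < d a) /\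
  (forall a, (a < NI)%nat -> S a 0%nat = RtoC (d a / Dtot NI d) /\
                             S 0%nat a = RtoC (d a / Dtot NI d)) /\
  (forall a, (a < NI)%nat -> holo_on_H (chi a)) /\
  (forall a, (a < NI)%nat -> (1 <= Nc a 0%nat)%nat) /\ Nc 0%nat 0%nat = 1%nat /\
  (forall a tau, (a < NI)%nat -> 0 < Im tau ->
     let term := fun k : nat =>
        Cmult (RtoC (INR (Nc a k))) (e2pi (Cmult tau (RtoC (h a - c/24 + INR k)))) in
     ex_series (fun k => Cmod (term k)) /\ is_series term (chi a tau)) /\
  (forall a tau, (a < NI)%nat -> 0 < Im tau ->
     chi a (Copp (Cinv tau)) = csum (fun b => Cmult (S a b) (chi b tau)) NI) /\
  (forall a tau, (a < NI)%nat -> 0 < Im tau ->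
     chi a (Cplus tau (RtoC 1)) = Cmult (e2pi (RtoC (h a - c/24))) (chi a tau)).

From Stdlib Require Import Reals Lra Lia.
From Coquelicot Require Import Coquelicot.
Open Scope R_scope.

(** Write E_b := h_b - c/24.  The q-expansion gives the leading asymptotics
   chi_b(r + i t) e^{2 pi t E_b} -> N_{b,0} e(r E_b) as t -> oo, the tail being
   dominated by e^{-2 pi t}.  Because h_1 = 0 < h_b for b <> 1 (the
   distinguished index 1 is numbered 0 in the formalisation), in any finite
   combination sum_k S_{bk} chi_k(r + i t) the vacuum character dominates.
   The numerator factor chi_a(-1/n + i y) is brought to the upper cusp by the
   modular moves tau |-> -1/tau, tau |-> tau + n, tau |-> -1/tau, which land at
   1/n + i/(n^2 y); likewise chi_a(i y) is brought there by -1/tau alone.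
   Hence, after multiplying T_a by an explicit positive real factor, the
   renormalised ratio [Tren] converges in the product filter (x -> oo, y -> 0+)
   to e(h_a/n - (2/n + n) c/24) zeta_{n,a} / d_a.  A general fact (a function
   which eventually is a positive multiple of one converging to l <> 0 has phase
   converging to l/|l|) then yields the theorem. *)

Lemma e2pi_add (z w : C) : e2pi (Cplus z w) = Cmult (e2pi z) (e2pi w).
Proof.
  destruct z as [a b], w as [p q]. unfold e2pi, Cmult, Cplus; simpl.
  replace (-(2*PI*(b+q))) with (-(2*PI*b) + -(2*PI*q)) by ring.
  replace (2*PI*(a+p)) with (2*PI*a + 2*PI*p) by ring.
  rewrite exp_plus, cos_plus, sin_plus. f_equal; ring.
Qed.

Lemma e2pi_split (z : C) :
  e2pi z = Cmult (RtoC (exp (-(2*PI*Im z)))) (e2pi (RtoC (Re z))).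
Proof.
  destruct z as [a b]. unfold e2pi, Cmult, RtoC; simpl.
  rewrite Rmult_0_r, Ropp_0, exp_0. f_equal; ring.
Qed.

Lemma Cmod_e2pi (z : C) : Cmod (e2pi z) = exp (-(2*PI*Im z)).
Proof.
  destruct z as [a b]. unfold Cmod, e2pi; simpl.
  set (e := exp _). set (u := 2*PI*a).
  assert (H := sin2_cos2 u). unfold Rsqr in H.
  replace (e * cos u * (e * cos u * 1) + e * sin u * (e * sin u * 1)) with (e*e)
    by (transitivity (e*e*(sin u * sin u + cos u * cos u)); [rewrite H|]; ring).
  apply sqrt_square. unfold e; left; apply exp_pos.
Qed.

Lemma Cmod_e2pi_R (r : R) : Cmod (e2pi (RtoC r)) = 1.
Proof. rewrite Cmod_e2pi. simpl. rewrite Rmult_0_r, Ropp_0. apply exp_0. Qed.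

Lemma e2pi_0 : e2pi (RtoC 0) = RtoC 1.
Proof.
  unfold e2pi, RtoC; simpl. rewrite !Rmult_0_r, Ropp_0, exp_0, cos_0, sin_0.
  f_equal; ring.
Qed.

Lemma exp_le (x y : R) : x <= y -> exp x <= exp y.
Proof. intros [H|H]; [left; apply exp_increasing; auto | subst; lra]. Qed.

Lemma RtoC_neq0 (x : R) : x <> 0 -> RtoC x <> RtoC 0.
Proof. intros H E. injection E. auto. Qed.

Lemma csum_ext (f g : nat -> C) n :
  (forall k, (k < n)%nat -> f k = g k) -> csum f n = csum g n.
Proof.
  induction n; intros H; simpl. reflexivity.
  rewrite IHn, H. reflexivity. lia. intros; apply H; lia.
Qed.

Lemma csum_mult_r (f : nat -> C) (z : C) n :
  Cmult (csum f n) z = csum (fun k => Cmult (f k) z) n.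
Proof. induction n; simpl. ring. rewrite <- IHn. ring. Qed.

Lemma csum_mult_l (f : nat -> C) (z : C) n :
  Cmult z (csum f n) = csum (fun k => Cmult z (f k)) n.
Proof. induction n; simpl. ring. rewrite <- IHn. ring. Qed.

Lemma csum_delta0 (g : nat -> C) (x : C) n : (0 < n)%nat ->
  csum (fun k => Cmult (g k) (if Nat.eqb k 0 then x else RtoC 0)) n = Cmult (g O) x.
Proof.
  induction n as [|n IH]; intros Hn. lia.
  destruct n as [|n]. simpl. ring.
  cbn [csum]. cbn [csum] in IH. rewrite IH by lia. simpl. ring.
Qed.

Lemma rsum_pos (f : nat -> R) n :
  (0 < n)%nat -> (forall k, 0 <= f k) -> 0 < f O -> 0 < rsum f n.
Proof.
  intros Hn Hf H0. induction n as [|n IH]. lia.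
  destruct n as [|n]. simpl. lra.
  simpl. simpl in IH. specialize (IH ltac:(lia)). specialize (Hf (Datatypes.S n)). lra.
Qed.

(** Limits of complex-valued functions.  [locally] on C is the product
   topology of R * R; these lemmas relate it to the modulus Cmod and to the
   absolute-value ring structure, where Coquelicot's algebraic limit rules live. *)

Lemma Clim_of_bound {T} (F : (T -> Prop) -> Prop) {FF : Filter F} (f : T -> C) (l : C) :
  (forall eps, 0 < eps -> F (fun x => Cmod (Cminus (f x) l) < eps)) ->
  filterlim f F (locally l).
Proof.
  intros H. apply filterlim_locally. intros eps.
  apply (filter_imp (fun x => Cmod (Cminus (f x) l) < eps)).
  - intros x Hx. apply C_NormedModule_mixin_compat1. exact Hx.
  - apply H, cond_pos.
Qed.

Lemma Clim_to_bound {T} (F : (T -> Prop) -> Prop) {FF : Filter F} (f : T -> C) (l : C) :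
  filterlim f F (locally l) ->
  forall eps, 0 < eps -> F (fun x => Cmod (Cminus (f x) l) < eps).
Proof.
  intros H eps Heps.
  assert (Hs : 0 < sqrt 2) by (apply sqrt_lt_R0; lra).
  assert (He : 0 < eps / sqrt 2) by (apply Rdiv_lt_0_compat; auto).
  apply (filter_imp (fun x => ball l (mkposreal _ He) (f x))).
  - intros x Hx. apply C_NormedModule_mixin_compat2 in Hx. simpl in Hx.
    replace eps with (sqrt 2 * (eps / sqrt 2)) by (field; lra). exact Hx.
  - apply (proj1 (filterlim_locally f l)). exact H.
Qed.

Lemma Clim_toabs {T} (F : (T -> Prop) -> Prop) {FF : Filter F} (f : T -> C) (l : C) :
  filterlim f F (locally l) ->
  filterlim (U := AbsRing_UniformSpace C_AbsRing) f F
    (@locally (AbsRing_UniformSpace C_AbsRing) l).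
Proof.
  intros H. apply (proj2 (filterlim_locally (U := AbsRing_UniformSpace C_AbsRing) f l)).
  intros eps. apply (filter_imp (fun x => Cmod (Cminus (f x) l) < eps)).
  - intros x Hx. exact Hx.
  - apply Clim_to_bound; auto. apply cond_pos.
Qed.

Lemma Clim_fromabs {T} (F : (T -> Prop) -> Prop) {FF : Filter F} (f : T -> C) (l : C) :
  filterlim (U := AbsRing_UniformSpace C_AbsRing) f F
    (@locally (AbsRing_UniformSpace C_AbsRing) l) ->
  filterlim f F (locally l).
Proof.
  intros H. apply (Clim_of_bound F). intros eps Heps.
  destruct (filterlim_locally (F := F) (U := AbsRing_UniformSpace C_AbsRing) f l) as [Hb _].
  exact (Hb H (mkposreal _ Heps)).
Qed.

Lemma Clim_mult {T} (F : (T -> Prop) -> Prop) {FF : Filter F} (f g : T -> C) (l m : C) :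
  filterlim f F (locally l) -> filterlim g F (locally m) ->
  filterlim (fun x => Cmult (f x) (g x)) F (locally (Cmult l m)).
Proof.
  intros Hf Hg. apply (Clim_fromabs F).
  apply (filterlim_comp_2 (G := @locally (AbsRing_UniformSpace C_AbsRing) l)
           (H := @locally (AbsRing_UniformSpace C_AbsRing) m) f g
           (fun a b => mult (K := C_AbsRing) a b) (Clim_toabs F f l Hf) (Clim_toabs F g m Hg)).
  exact (filterlim_mult (K := C_AbsRing) l m).
Qed.

Lemma Clim_plus {T} (F : (T -> Prop) -> Prop) {FF : Filter F} (f g : T -> C) (l m : C) :
  filterlim f F (locally l) -> filterlim g F (locally m) ->
  filterlim (fun x => Cplus (f x) (g x)) F (locally (Cplus l m)).
Proof.
  intros Hf Hg.
  apply (filterlim_comp_2 f g (fun a b => plus (G := C_AbelianGroup) a b) Hf Hg).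
  apply (filterlim_plus (K := C_AbsRing) (V := C_NormedModule) l m).
Qed.

Lemma Clim_csum {T} (F : (T -> Prop) -> Prop) {FF : Filter F}
  (f : nat -> T -> C) (l : nat -> C) (n : nat) :
  (forall k, (k < n)%nat -> filterlim (f k) F (locally (l k))) ->
  filterlim (fun x => csum (fun k => f k x) n) F (locally (csum l n)).
Proof.
  induction n as [|n IH]; intros H; simpl.
  - apply filterlim_const.
  - apply (Clim_plus F); [apply IH; intros; apply H; lia | apply H; lia].
Qed.

(* |f x| >= |l|/2 eventually, which controls 1/f x - 1/l = (l - f x)/(f x l). *)
Lemma Clim_inv {T} (F : (T -> Prop) -> Prop) {FF : Filter F} (f : T -> C) (l : C) :
  l <> RtoC 0 -> filterlim f F (locally l) ->
  filterlim (fun x => Cinv (f x)) F (locally (Cinv l)).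
Proof.
  intros Hl Hf. apply (Clim_of_bound F). intros eps Heps.
  assert (Hm : 0 < Cmod l) by (apply Cmod_gt_0; exact Hl).
  set (del := Rmin (Cmod l / 2) (eps * (Cmod l * Cmod l) / 2)).
  assert (Hd : 0 < del).
  { unfold del. apply Rmin_pos. lra. apply Rdiv_lt_0_compat; [|lra].
    apply Rmult_lt_0_compat; [lra| nra]. }
  apply (filter_imp (fun x => Cmod (Cminus (f x) l) < del)).
  2: apply Clim_to_bound; auto.
  intros x Hx.
  assert (Hd1 : del <= Cmod l / 2) by apply Rmin_l.
  assert (Hd2 : del <= eps * (Cmod l * Cmod l) / 2) by apply Rmin_r.
  assert (Hfx : Cmod l / 2 <= Cmod (f x)).
  { assert (Ht := Cmod_triangle (f x) (Cminus l (f x))).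
    replace (Cplus (f x) (Cminus l (f x))) with l in Ht by ring.
    replace (Cminus l (f x)) with (Copp (Cminus (f x) l)) in Ht by ring.
    rewrite Cmod_opp in Ht. lra. }
  assert (Hfx0 : f x <> RtoC 0).
  { intros E. rewrite E, Cmod_0 in Hfx. lra. }
  replace (Cminus (Cinv (f x)) (Cinv l)) with (Cdiv (Copp (Cminus (f x) l)) (Cmult (f x) l))
    by (field; split; auto).
  rewrite Cmod_div, Cmod_opp, Cmod_mult.
  2: { intros E. apply (f_equal Cmod) in E. rewrite Cmod_mult, Cmod_0 in E. nra. }
  apply Rmult_lt_reg_r with (Cmod (f x) * Cmod l).
  { apply Rmult_lt_0_compat; lra. }
  unfold Rdiv. rewrite Rmult_assoc, Rinv_l, Rmult_1_r.
  2: { apply Rgt_not_eq. apply Rmult_lt_0_compat; lra. }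
  assert (0 <= eps * Cmod l) by nra.
  nra.
Qed.

Lemma Clim_nonzero {T} (F : (T -> Prop) -> Prop) {FF : Filter F} (f : T -> C) (l : C) :
  filterlim f F (locally l) -> l <> RtoC 0 -> F (fun x => f x <> RtoC 0).
Proof.
  intros Hf Hl. assert (Hm : 0 < Cmod l) by (apply Cmod_gt_0; exact Hl).
  apply (filter_imp (fun x => Cmod (Cminus (f x) l) < Cmod l)).
  - intros x Hx E. rewrite E in Hx.
    replace (Cminus (RtoC 0) l) with (Copp l) in Hx by ring. rewrite Cmod_opp in Hx. lra.
  - apply Clim_to_bound; auto.
Qed.

Lemma Cmod_rev (u v : C) : Rabs (Cmod u - Cmod v) <= Cmod (Cminus u v).
Proof.
  assert (H1 := Cmod_triangle (Cminus u v) v).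
  assert (H2 := Cmod_triangle (Cminus v u) u).
  replace (Cplus (Cminus u v) v) with u in H1 by ring.
  replace (Cplus (Cminus v u) u) with v in H2 by ring.
  replace (Cminus v u) with (Copp (Cminus u v)) in H2 by ring.
  rewrite Cmod_opp in H2. apply Rabs_le. lra.
Qed.

Lemma Clim_phase {T} (F : (T -> Prop) -> Prop) {FF : Filter F} (f : T -> C) (l : C) :
  filterlim f F (locally l) -> l <> RtoC 0 ->
  filterlim (fun x => Cdiv (f x) (RtoC (Cmod (f x)))) F (locally (Cdiv l (RtoC (Cmod l)))).
Proof.
  intros Hf Hl. assert (Hm : 0 < Cmod l) by (apply Cmod_gt_0; exact Hl).
  unfold Cdiv. apply (Clim_mult F); [exact Hf|].
  apply (Clim_inv F); [apply RtoC_neq0; lra|].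
  apply (Clim_of_bound F). intros eps Heps.
  apply (filter_imp (fun x => Cmod (Cminus (f x) l) < eps)).
  - intros x Hx.
    replace (Cminus (RtoC (Cmod (f x))) (RtoC (Cmod l))) with (RtoC (Cmod (f x) - Cmod l))
      by (unfold Cminus, Cplus, Copp, RtoC; simpl; f_equal; ring).
    rewrite Cmod_R. eapply Rle_lt_trans; [apply Cmod_rev | exact Hx].
  - apply Clim_to_bound; auto.
Qed.

Lemma phase_scale (z : C) (q : R) : 0 < q -> z <> RtoC 0 ->
  Cdiv (Cmult z (RtoC q)) (RtoC (Cmod (Cmult z (RtoC q)))) = Cdiv z (RtoC (Cmod z)).
Proof.
  intros Hq Hz. rewrite Cmod_mult, Cmod_R, Rabs_pos_eq by lra.
  assert (Hm : 0 < Cmod z) by (apply Cmod_gt_0; exact Hz).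
  rewrite RtoC_mult. field. split; apply RtoC_neq0; lra.
Qed.

Lemma phase_limit {T} (F : (T -> Prop) -> Prop) {FF : Filter F} (f g : T -> C) (l : C) :
  filterlim f F (locally l) -> l <> RtoC 0 ->
  F (fun x => exists q, 0 < q /\ f x = Cmult (g x) (RtoC q)) ->
  F (fun x => g x <> RtoC 0) /\
  filterlim (fun x => Cdiv (g x) (RtoC (Cmod (g x)))) F (locally (Cdiv l (RtoC (Cmod l)))).
Proof.
  intros Hf Hl Hq.
  assert (Hev : F (fun x => f x <> RtoC 0 /\ exists q, 0 < q /\ f x = Cmult (g x) (RtoC q)))
    by (apply filter_and; [exact (Clim_nonzero F f l Hf Hl) | exact Hq]).
  assert (Hg : F (fun x => g x <> RtoC 0)).
  { eapply filter_imp; [|exact Hev]. intros x [Hfx [q [_ E]]] Eg.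
    apply Hfx. rewrite E, Eg. ring. }
  split; [exact Hg|].
  apply (filterlim_ext_loc (fun x => Cdiv (f x) (RtoC (Cmod (f x))))).
  - eapply filter_imp; [|exact (filter_and _ _ Hg Hev)]. intros x [Hgx [_ [q [Hq0 E]]]].
    rewrite E. apply phase_scale; auto.
  - apply (Clim_phase F); auto.
Qed.

Lemma phase_rotate_scale (th rho : R) (z : C) : 0 < rho -> z <> RtoC 0 ->
  Cdiv (Cmult (e2pi (RtoC th)) (Cmult (RtoC rho) z))
       (RtoC (Cmod (Cmult (e2pi (RtoC th)) (Cmult (RtoC rho) z)))) =
  Cmult (e2pi (RtoC th)) (Cdiv z (RtoC (Cmod z))).
Proof.
  intros Hr Hz. rewrite !Cmod_mult, Cmod_e2pi_R, Cmod_R, Rabs_pos_eq by lra.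
  assert (Hm : 0 < Cmod z) by (apply Cmod_gt_0; exact Hz).
  rewrite Rmult_1_l, RtoC_mult. field. split; apply RtoC_neq0; lra.
Qed.

Lemma lim_fst {F G : (R -> Prop) -> Prop} {FF : Filter F} {FG : Filter G} (f : R -> C) (l : C) :
  filterlim f F (locally l) ->
  filterlim (fun p : R * R => f (fst p)) (filter_prod F G) (locally l).
Proof. intros H. eapply filterlim_comp; [apply filterlim_fst | exact H]. Qed.

Lemma lim_snd {F G : (R -> Prop) -> Prop} {FF : Filter F} {FG : Filter G} (f : R -> C) (l : C) :
  filterlim f G (locally l) ->
  filterlim (fun p : R * R => f (snd p)) (filter_prod F G) (locally l).
Proof. intros H. eapply filterlim_comp; [apply filterlim_snd | exact H]. Qed.

Lemma lim_at_right_of_inv (kap : R) (g : R -> C) (l : C) : 0 < kap ->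
  filterlim g (Rbar_locally p_infty) (locally l) ->
  filterlim (fun y => g (/(kap*y))) (at_right 0) (locally l).
Proof.
  intros Hk Hg. eapply filterlim_comp; [|exact Hg].
  intros P [M HM]. unfold filtermap, at_right, within.
  set (M' := Rabs M + 1).
  assert (HM' : M < M' /\ 0 < M') by (unfold M'; pose proof (Rabs_pos M); pose proof (Rle_abs M); lra).
  assert (Hd : 0 < /(kap*M')) by (apply Rinv_0_lt_compat; nra).
  exists (mkposreal _ Hd). intros y Hy Hy0. apply HM.
  change (Rabs (y + - 0) < /(kap*M')) in Hy.
  rewrite Ropp_0, Rplus_0_r, Rabs_pos_eq in Hy by lra.
  assert (Hky : 0 < kap*y) by nra.
  assert (Hlt : kap*y*M' < 1).
  { apply Rmult_lt_compat_l with (r := kap*M') in Hy; [|nra].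
    rewrite Rinv_r in Hy by nra. nra. }
  apply Rlt_trans with M'; [lra|].
  apply Rmult_lt_reg_l with (kap*y); auto. rewrite Rinv_r by lra. lra.
Qed.

(** Along r + i t, t -> oo, e^{2 pi t E} f(r + i t) tends to the
   leading coefficient N_0 e(r E): every other term carries an extra factor
   e^{-2 pi t k}, and comparing with the convergent series at t = 1 bounds the
   whole tail by a multiple of e^{-2 pi (t - 1)}. *)

Definition qterm (N : nat -> nat) (E : R) (tau : C) (k : nat) : C :=
  Cmult (RtoC (INR (N k))) (e2pi (Cmult tau (RtoC (E + INR k)))).

Definition is_qexpansion (N : nat -> nat) (E : R) (f : C -> C) : Prop :=
  forall tau, 0 < Im tau ->
    ex_series (fun k => Cmod (qterm N E tau k)) /\ is_series (qterm N E tau) (f tau).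

Lemma series_tail_bound (u : nat -> C) (l : C) (b : nat -> R) :
  is_series u l -> ex_series b -> (forall k, 0 <= b k) ->
  (forall k, Cmod (u (S k)) <= b (S k)) ->
  Cmod (Cminus l (u O)) <= Series b.
Proof.
  intros Hu Hb Hb0 Hub.
  assert (Hp : forall N, Cmod (Cminus (sum_n u N) (u O)) <= sum_n b N).
  { induction N as [|N IH].
    - rewrite !sum_O. replace (Cminus (u O) (u O)) with (RtoC 0) by ring.
      rewrite Cmod_0. apply Hb0.
    - rewrite !sum_Sn. change (plus (sum_n b N) (b (S N))) with (sum_n b N + b (S N)).
      change (plus (sum_n u N) (u (S N))) with (Cplus (sum_n u N) (u (S N))).
      replace (Cminus (Cplus (sum_n u N) (u (S N))) (u O))
        with (Cplus (Cminus (sum_n u N) (u O)) (u (S N))) by ring.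
      eapply Rle_trans; [apply Cmod_triangle|]. specialize (Hub N). lra. }
  assert (Hlim : is_lim_seq (fun N => Cmod (Cminus (sum_n u N) (u O))) (Cmod (Cminus l (u O)))).
  { apply is_lim_seq_spec. intros eps.
    apply (filter_imp (fun N => Cmod (Cminus (sum_n u N) l) < eps)).
    - intros N HN. eapply Rle_lt_trans; [apply Cmod_rev|].
      replace (Cminus (Cminus (sum_n u N) (u O)) (Cminus l (u O)))
        with (Cminus (sum_n u N) l) by ring. exact HN.
    - apply (Clim_to_bound eventually); [exact Hu | apply cond_pos]. }
  assert (Hsum : is_lim_seq (sum_n b) (Series b)) by exact (Series_correct _ Hb).
  exact (is_lim_seq_le _ _ _ _ Hp Hlim Hsum).
Qed.

Lemma exp_decay (K a t0 : R) : 0 <= K -> 0 < a -> forall eps, 0 < eps ->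
  exists T, forall t, T < t -> K * exp (-(a*(t - t0))) < eps.
Proof.
  intros HK Ha eps He. exists (t0 + K/(a*eps)). intros t Ht.
  set (u := a*(t-t0)).
  assert (Hu : K/eps < u).
  { unfold u. assert (K/(a*eps) < t - t0) by lra.
    apply Rmult_lt_compat_l with (r:=a) in H; auto.
    replace (a * (K/(a*eps))) with (K/eps) in H by (field; lra). exact H. }
  assert (Hu0 : 0 <= K/eps) by (apply Rdiv_le_0_compat; lra).
  assert (He1 := exp_ineq1_le u).
  rewrite exp_Ropp.
  assert (Hexp : 0 < exp u) by apply exp_pos.
  apply Rmult_lt_reg_r with (exp u); auto.
  rewrite Rmult_assoc, Rinv_l, Rmult_1_r by lra.
  assert (K < eps * u).
  { apply Rmult_lt_compat_l with (r:=eps) in Hu; auto.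
    replace (eps * (K/eps)) with K in Hu by (field; lra). exact Hu. }
  nra.
Qed.

Lemma exp_decay_lim (a : R) : 0 < a ->
  filterlim (fun t => RtoC (exp (-(a*t)))) (Rbar_locally p_infty) (locally (RtoC 0)).
Proof.
  intros Ha. apply (Clim_of_bound (Rbar_locally p_infty)). intros eps Heps.
  destruct (exp_decay 1 a 0 ltac:(lra) Ha eps Heps) as [T HT].
  exists T. intros t Ht. specialize (HT t Ht).
  replace (Cminus (RtoC (exp (-(a*t)))) (RtoC 0)) with (RtoC (exp (-(a*(t-0)))))
    by (rewrite Rminus_0_r; ring).
  rewrite Cmod_R, Rabs_pos_eq by (left; apply exp_pos). lra.
Qed.

Section QSeries.

Variables (N : nat -> nat) (E : R).

Lemma Cmod_qterm (r t : R) (k : nat) :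
  Cmod (qterm N E (r,t) k) = INR (N k) * exp (-(2*PI*(t*(E + INR k)))).
Proof.
  unfold qterm. rewrite Cmod_mult, Cmod_R, Rabs_pos_eq by apply pos_INR.
  rewrite Cmod_e2pi. do 4 f_equal. simpl. ring.
Qed.

Lemma qterm_domination (r t : R) (k : nat) : 1 <= t ->
  exp (2*PI*t*E) * Cmod (qterm N E (r,t) (S k)) <=
  exp (-(2*PI*(t-1))) * exp (2*PI*E) * Cmod (qterm N E (r,1) (S k)).
Proof.
  intros Ht. rewrite !Cmod_qterm.
  set (M := INR (N (S k))). set (k' := INR (S k)).
  assert (Hk' : 1 <= k') by (unfold k'; rewrite S_INR; pose proof (pos_INR k); lra).
  assert (HM : 0 <= M) by apply pos_INR.
  replace (exp (2*PI*t*E) * (M * exp (-(2*PI*(t*(E + k'))))))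
    with (M * exp (2*PI*t*E + -(2*PI*(t*(E + k'))))) by (rewrite exp_plus; ring).
  replace (exp (-(2*PI*(t-1))) * exp (2*PI*E) * (M * exp (-(2*PI*(1*(E + k'))))))
    with (M * exp (-(2*PI*(t-1)) + 2*PI*E + -(2*PI*(1*(E + k')))))
    by (rewrite !exp_plus; ring).
  apply Rmult_le_compat_l; auto. apply exp_le.
  assert (0 <= (t-1)*(k'-1)) by (apply Rmult_le_pos; lra).
  pose proof PI_RGT_0. nra.
Qed.

Lemma qterm_leading (r t : R) :
  Cmult (RtoC (exp (2*PI*t*E))) (qterm N E (r,t) O) =
  Cmult (RtoC (INR (N O))) (e2pi (RtoC (r*E))).
Proof.
  unfold qterm. rewrite e2pi_split.
  replace (Re (Cmult (r,t) (RtoC (E + INR O)))) with (r*E) by (simpl; ring).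
  replace (Im (Cmult (r,t) (RtoC (E + INR O)))) with (t*E) by (simpl; ring).
  assert (Hone : Cmult (RtoC (exp (2*PI*t*E))) (RtoC (exp (-(2*PI*(t*E))))) = RtoC 1).
  { rewrite <- RtoC_mult, <- exp_plus.
    replace (2*PI*t*E + -(2*PI*(t*E))) with 0 by ring. rewrite exp_0. reflexivity. }
  transitivity (Cmult (Cmult (RtoC (exp (2*PI*t*E))) (RtoC (exp (-(2*PI*(t*E))))))
                      (Cmult (RtoC (INR (N O))) (e2pi (RtoC (r*E))))); [ring|].
  rewrite Hone. ring.
Qed.

Variable f : C -> C.
Hypothesis Hf : is_qexpansion N E f.

Lemma qseries_error_bound (r t : R) : 1 < t ->
  Cmod (Cminus (Cmult (f (r,t)) (RtoC (exp (2*PI*t*E))))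
               (Cmult (RtoC (INR (N O))) (e2pi (RtoC (r*E))))) <=
  exp (2*PI*E) * Series (fun k => Cmod (qterm N E (r,1) k)) * exp (-(2*PI*(t-1))).
Proof.
  intros Ht.
  destruct (Hf (r,1) ltac:(simpl; lra)) as [Hex1 _].
  destruct (Hf (r,t) ltac:(simpl; lra)) as [_ Hs].
  set (b := fun k => exp (-(2*PI*(t-1))) * exp (2*PI*E) * Cmod (qterm N E (r,1) k)).
  assert (Hb : ex_series b) by apply (ex_series_scal_l _ _ Hex1).
  assert (Hb0 : forall k, 0 <= b k).
  { intros k. unfold b. apply Rmult_le_pos; [|apply Cmod_ge_0].
    apply Rmult_le_pos; left; apply exp_pos. }
  assert (Hdom : forall k, Cmod (scal (RtoC (exp (2*PI*t*E))) (qterm N E (r,t) (S k)))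
                           <= b (S k)).
  { intros k. change (scal (RtoC ?K) ?z) with (Cmult (RtoC K) z).
    rewrite Cmod_mult, Cmod_R, Rabs_pos_eq by (left; apply exp_pos).
    apply qterm_domination. lra. }
  pose proof (series_tail_bound _ _ b (is_series_scal (RtoC (exp (2*PI*t*E))) _ _ Hs)
                Hb Hb0 Hdom) as Htail.
  change (scal (RtoC ?K) ?z) with (Cmult (RtoC K) z) in Htail. cbv beta in Htail.
  rewrite qterm_leading in Htail. unfold b in Htail. rewrite Series_scal_l in Htail.
  rewrite Cmult_comm. eapply Rle_trans; [exact Htail | right; ring].
Qed.

Lemma qseries_leading_asymptotics (r : R) :
  filterlim (fun t => Cmult (f (r,t)) (RtoC (exp (2*PI*t*E))))
    (Rbar_locally p_infty) (locally (Cmult (RtoC (INR (N O))) (e2pi (RtoC (r*E))))).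
Proof.
  apply (Clim_of_bound (Rbar_locally p_infty)). intros eps Heps.
  destruct (Hf (r,1) ltac:(simpl; lra)) as [Hex1 _].
  set (M := Series (fun k => Cmod (qterm N E (r,1) k))).
  assert (HM : 0 <= M).
  { replace 0 with (0 * M) by ring. unfold M. rewrite <- Series_scal_l.
    apply Series_le; [|exact Hex1].
    intros k. pose proof (Cmod_ge_0 (qterm N E (r,1) k)). lra. }
  assert (HK : 0 <= exp (2*PI*E) * M) by (apply Rmult_le_pos; [left; apply exp_pos | exact HM]).
  destruct (exp_decay _ (2*PI) 1 HK ltac:(pose PI_RGT_0; lra) eps Heps) as [T HT].
  exists (Rmax T 1). intros t Ht.
  assert (Ht1 : 1 < t) by (eapply Rle_lt_trans; [apply Rmax_r | exact Ht]).
  assert (HtT : T < t) by (eapply Rle_lt_trans; [apply Rmax_l | exact Ht]).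
  eapply Rle_lt_trans; [apply qseries_error_bound; exact Ht1 | apply HT; exact HtT].
Qed.

End QSeries.

Lemma minus_inv_shift_point (N y : R) : 0 < N -> 0 < y ->
  ((-(1/N)), y) = Copp (Cinv (Cplus (Copp (Cinv (1/N, /(N^2*y)))) (RtoC N))).
Proof.
  intros HN Hy.
  unfold Copp, Cinv, Cplus, RtoC; simpl.
  assert (H1 : 0 < 1/N * (1/N * 1) + / (N * (N * 1) * y) * (/ (N * (N * 1) * y) * 1)).
  { assert (0 < 1/N) by (apply Rdiv_lt_0_compat; lra). nra. }
  f_equal; field; repeat split; try (intro Hc; ring_simplify in Hc; nra); lra.
Qed.

Lemma imag_axis_inversion (y : R) : 0 < y -> (0, y) = Copp (Cinv (0, /y)).
Proof.
  intros Hy. unfold Copp, Cinv; simpl.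
  f_equal; field; repeat split; try (intro Hc; ring_simplify in Hc; nra); lra.
Qed.

Section Characters.

Variables (NI : nat) (c : R) (h d : nat -> R) (S : nat -> nat -> C)
  (chi : nat -> C -> C) (Nc : nat -> nat -> nat).
Hypothesis Hdata : RCFT_data NI c h d S chi Nc.

Lemma chi_qexpansion (b : nat) : (b < NI)%nat -> is_qexpansion (Nc b) (h b - c/24) (chi b).
Proof.
  intros Hb tau Htau. destruct Hdata as (_&_&_&_&_&_&_&_&Hq&_).
  exact (Hq b tau Hb Htau).
Qed.

Lemma chi_leading (b : nat) (r : R) : (b < NI)%nat ->
  filterlim (fun t => Cmult (chi b (r,t)) (RtoC (exp (2*PI*t*(h b - c/24)))))
    (Rbar_locally p_infty)
    (locally (Cmult (RtoC (INR (Nc b O))) (e2pi (RtoC (r*(h b - c/24)))))).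
Proof. intros Hb. exact (qseries_leading_asymptotics _ _ _ (chi_qexpansion b Hb) r). Qed.

(* Vacuum dominance: since h_0 = 0 < h_k for k <> 0 and N_{0,0} = 1, in a
   combination sum_k S_{bk} chi_k the vacuum term alone survives. *)
Lemma vacuum_dominance (b : nat) (r : R) :
  filterlim (fun t => Cmult (csum (fun k => Cmult (S b k) (chi k (r,t))) NI)
                            (RtoC (exp (2*PI*t*(h O - c/24)))))
    (Rbar_locally p_infty)
    (locally (Cmult (S b O) (e2pi (RtoC (r*(h O - c/24)))))).
Proof.
  destruct Hdata as (HNI&Hh0&Hhpos&_&_&_&_&HN00&_).
  eapply filterlim_ext. { intros t. symmetry. apply csum_mult_r. }
  rewrite <- (csum_delta0 (S b) (e2pi (RtoC (r*(h O - c/24)))) NI HNI).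
  apply (Clim_csum (Rbar_locally p_infty)). intros k Hk.
  (* split off the relative weight exp(-2 pi h_k t) of the k-th character *)
  apply (filterlim_ext (fun t => Cmult (S b k)
     (Cmult (Cmult (chi k (r,t)) (RtoC (exp (2*PI*t*(h k - c/24)))))
            (RtoC (exp (-(2*PI*h k*t))))))).
  { intros t. rewrite <- !Cmult_assoc, <- RtoC_mult, <- exp_plus, Hh0.
    do 4 f_equal. ring. }
  apply (Clim_mult (Rbar_locally p_infty)); [apply filterlim_const|].
  destruct (Nat.eqb k 0) eqn:Ek.
  - apply Nat.eqb_eq in Ek. subst k.
    replace (e2pi (RtoC (r * (h 0%nat - c / 24)))) with
      (Cmult (Cmult (RtoC (INR (Nc 0%nat 0%nat))) (e2pi (RtoC (r * (h 0%nat - c / 24)))))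
             (RtoC 1)) by (rewrite HN00; simpl; ring).
    apply (Clim_mult (Rbar_locally p_infty)); [apply chi_leading; exact HNI|].
    rewrite Hh0. apply (filterlim_ext (fun _ => RtoC 1)); [|apply filterlim_const].
    intros t. replace (-(2*PI*0*t)) with 0 by ring. rewrite exp_0. reflexivity.
  - apply Nat.eqb_neq in Ek.
    replace (RtoC 0) with
      (Cmult (Cmult (RtoC (INR (Nc k 0%nat))) (e2pi (RtoC (r * (h k - c / 24))))) (RtoC 0))
      by ring.
    apply (Clim_mult (Rbar_locally p_infty)); [apply chi_leading; exact Hk|].
    apply exp_decay_lim. assert (0 < h k) by (apply Hhpos; lia).
    pose proof PI_RGT_0. nra.
Qed.

Lemma chi_shift (b m : nat) (tau : C) : (b < NI)%nat -> 0 < Im tau ->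
  chi b (Cplus tau (RtoC (INR m))) = Cmult (e2pi (RtoC (INR m * (h b - c/24)))) (chi b tau).
Proof.
  intros Hb Ht. destruct Hdata as (_&_&_&_&_&_&_&_&_&_&HT).
  induction m as [|m IH].
  - simpl. rewrite Rmult_0_l, e2pi_0.
    replace (Cplus tau (RtoC 0)) with tau by ring. ring.
  - replace (Cplus tau (RtoC (INR (Datatypes.S m))))
      with (Cplus (Cplus tau (RtoC (INR m))) (RtoC 1)) by (rewrite S_INR, RtoC_plus; ring).
    rewrite HT by (auto; destruct tau; simpl in *; lra).
    rewrite IH, Cmult_assoc, <- e2pi_add, <- RtoC_plus, S_INR.
    do 3 f_equal. ring.
Qed.

Lemma chi_near_minus_one_over_n (a n : nat) (y : R) :
  (a < NI)%nat -> (1 <= n)%nat -> 0 < y ->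
  chi a ((-(1/INR n)), y) =
  csum (fun b => Cmult (S a b) (Cmult (e2pi (RtoC (INR n * (h b - c/24))))
     (csum (fun k => Cmult (S b k) (chi k (1/INR n, /(INR n ^2 * y)))) NI))) NI.
Proof.
  intros Ha Hn Hy.
  assert (HN : 0 < INR n) by (apply lt_0_INR; lia).
  destruct Hdata as (_&_&_&_&_&_&_&_&_&HS&_).
  set (rho := (1/INR n, /(INR n ^2 * y))).
  assert (HN2 : 0 < INR n ^ 2 * y) by (apply Rmult_lt_0_compat; [apply pow_lt|]; lra).
  assert (Hrho : 0 < Im rho) by (simpl; apply Rinv_0_lt_compat; lra).
  assert (Hrho' : 0 < Im (Copp (Cinv rho))).
  { unfold rho. simpl.
    set (u := 1/INR n). set (t := / (INR n * (INR n * 1) * y)).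
    assert (0 < u) by (apply Rdiv_lt_0_compat; lra).
    assert (0 < t) by (unfold t; apply Rinv_0_lt_compat; simpl in HN2; lra).
    assert (0 < u * (u * 1) + t * (t * 1)) by nra.
    replace (- (- t / (u * (u * 1) + t * (t * 1)))) with (t / (u * (u * 1) + t * (t * 1)))
      by (field; lra).
    apply Rdiv_lt_0_compat; lra. }
  assert (Htau : 0 < Im (Cplus (Copp (Cinv rho)) (RtoC (INR n)))) by (simpl in *; lra).
  rewrite (minus_inv_shift_point (INR n) y HN Hy). fold rho.
  rewrite HS by auto.
  apply csum_ext. intros b Hb. f_equal.
  rewrite chi_shift, HS by auto. reflexivity.
Qed.

Lemma chi_imag_axis (a : nat) (y : R) : (a < NI)%nat -> 0 < y ->
  chi a (0, y) = csum (fun b => Cmult (S a b) (chi b (0, /y))) NI.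
Proof.
  intros Ha Hy. destruct Hdata as (_&_&_&_&_&_&_&_&_&HS&_).
  rewrite (imag_axis_inversion y Hy). apply HS; auto. simpl. apply Rinv_0_lt_compat; lra.
Qed.


Lemma Dtot_pos : 0 < Dtot NI d.
Proof.
  destruct Hdata as (HNI&_&_&Hdpos&_).
  unfold Dtot. apply sqrt_lt_R0. apply rsum_pos; auto.
  - intros k; apply pow2_ge_0.
  - apply pow_lt. apply Hdpos; auto.
Qed.

(* The vacuum parts of the characters at 1/n + i oo recombine into zeta_{n,a},
   because S_{b1} = d_b / D. *)
Lemma cusp_value_minus (a n : nat) :
  csum (fun b => Cmult (S a b) (Cmult (e2pi (RtoC (INR n * (h b - c/24))))
                 (Cmult (S b O) (e2pi (RtoC (1/INR n * (h O - c/24))))))) NI =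
  Cmult (e2pi (RtoC (INR n * (-(c/24)) + 1/INR n * (h O - c/24))))
        (Cmult (RtoC (/ Dtot NI d)) (zeta NI S d h n a)).
Proof.
  destruct Hdata as (_&_&_&_&HS1&_).
  unfold zeta. rewrite csum_mult_l, csum_mult_l. apply csum_ext. intros b Hb.
  rewrite (proj1 (HS1 b Hb)).
  replace (INR n * (h b - c/24)) with (INR n * h b + INR n * (-(c/24))) by ring.
  rewrite !RtoC_plus, !e2pi_add.
  replace (RtoC (d b / Dtot NI d)) with (Cmult (RtoC (d b)) (RtoC (/ Dtot NI d)))
    by (rewrite <- RtoC_mult; reflexivity).
  ring.
Qed.

Lemma cusp_limit_minus (a n : nat) : (a < NI)%nat -> (1 <= n)%nat ->
  filterlim (fun y => Cmult (chi a (-(1/INR n), y))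
                            (RtoC (exp (2*PI*(/(INR n ^ 2 * y))*(h O - c/24)))))
    (at_right 0)
    (locally (Cmult (e2pi (RtoC (INR n * (-(c/24)) + 1/INR n * (h O - c/24))))
                    (Cmult (RtoC (/ Dtot NI d)) (zeta NI S d h n a)))).
Proof.
  intros Ha Hn. rewrite <- cusp_value_minus.
  assert (Hk : 0 < INR n ^ 2) by (apply pow_lt, lt_0_INR; lia).
  set (g := fun t => csum (fun b => Cmult (S a b) (Cmult (e2pi (RtoC (INR n * (h b - c/24))))
       (Cmult (csum (fun k => Cmult (S b k) (chi k (1/INR n, t))) NI)
              (RtoC (exp (2*PI*t*(h O - c/24))))))) NI).
  apply (filterlim_ext_loc (fun y => g (/(INR n ^ 2 * y)))).
  - exists (mkposreal 1 Rlt_0_1). intros y _ Hy.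
    rewrite (chi_near_minus_one_over_n a n y Ha Hn Hy), csum_mult_r.
    apply csum_ext. intros b Hb. unfold g. ring.
  - apply lim_at_right_of_inv; [exact Hk|].
    apply (Clim_csum (Rbar_locally p_infty)). intros b Hb.
    apply (Clim_mult (Rbar_locally p_infty)); [apply filterlim_const|].
    apply (Clim_mult (Rbar_locally p_infty)); [apply filterlim_const|].
    apply vacuum_dominance.
Qed.

Lemma cusp_limit_zero (a : nat) : (a < NI)%nat ->
  filterlim (fun y => Cmult (chi a (0, y)) (RtoC (exp (2*PI*(/y)*(h O - c/24)))))
    (at_right 0) (locally (RtoC (d a / Dtot NI d))).
Proof.
  intros Ha. pose proof Hdata as (_&_&_&_&HS1&_).
  replace (RtoC (d a / Dtot NI d)) with (Cmult (S a O) (e2pi (RtoC (0*(h O - c/24)))))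
    by (rewrite Rmult_0_l, e2pi_0, (proj1 (HS1 a Ha)); ring).
  apply (filterlim_ext_loc (fun y =>
    Cmult (csum (fun k => Cmult (S a k) (chi k (0, /(1*y)))) NI)
          (RtoC (exp (2*PI*(/(1*y))*(h O - c/24)))))).
  - exists (mkposreal 1 Rlt_0_1). intros y _ Hy.
    rewrite (chi_imag_axis a y Ha Hy), Rmult_1_l. reflexivity.
  - apply (lim_at_right_of_inv 1 (fun t => Cmult (csum (fun k => Cmult (S a k) (chi k (0, t))) NI)
                                    (RtoC (exp (2*PI*t*(h O - c/24)))))); [lra|].
    apply vacuum_dominance.
Qed.

Lemma upper_limit_imag_axis (a : nat) : (a < NI)%nat ->
  filterlim (fun x => Cmult (chi a (0, x)) (RtoC (exp (2*PI*x*(h a - c/24)))))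
    (Rbar_locally p_infty) (locally (RtoC (INR (Nc a O)))).
Proof.
  intros Ha.
  replace (RtoC (INR (Nc a O))) with
    (Cmult (RtoC (INR (Nc a O))) (e2pi (RtoC (0*(h a - c/24)))))
    by (rewrite Rmult_0_l, e2pi_0; ring).
  apply chi_leading; exact Ha.
Qed.

Definition Tren (a n : nat) (x y : R) : C :=
  Cdiv (Cmult (Cmult (chi a (1/INR n, x)) (RtoC (exp (2*PI*x*(h a - c/24)))))
              (Cmult (chi a (-(1/INR n), y))
                     (RtoC (exp (2*PI*(/(INR n ^ 2 * y))*(h O - c/24))))))
       (Cmult (Cmult (chi a (0, x)) (RtoC (exp (2*PI*x*(h a - c/24)))))
              (Cmult (chi a (0, y)) (RtoC (exp (2*PI*(/y)*(h O - c/24)))))).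

Lemma Tren_limit (a n : nat) : (a < NI)%nat -> (1 <= n)%nat ->
  filterlim (fun p : R * R => Tren a n (fst p) (snd p))
    (filter_prod (Rbar_locally p_infty) (at_right 0))
    (locally (Cmult (e2pi (RtoC (h a / INR n - (2 / INR n + INR n) * (c / 24))))
                    (Cmult (RtoC (/ d a)) (zeta NI S d h n a)))).
Proof.
  intros Ha Hn. pose proof Hdata as (_&Hh0&_&Hdpos&_&_&HNa&_).
  assert (HN : 0 < INR n) by (apply lt_0_INR; lia).
  assert (HNa0 : 0 < INR (Nc a O)) by (apply lt_0_INR; specialize (HNa a Ha); lia).
  assert (HD := Dtot_pos). assert (Hda := Hdpos a Ha).
  set (F := filter_prod (Rbar_locally p_infty) (at_right 0)).
  replace (e2pi (RtoC (h a / INR n - (2 / INR n + INR n) * (c / 24)))) with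
    (Cmult (e2pi (RtoC (1/INR n * (h a - c/24))))
           (e2pi (RtoC (INR n * (-(c/24)) + 1/INR n * (h O - c/24)))))
    by (rewrite <- e2pi_add, <- RtoC_plus, Hh0; do 2 f_equal; field; lra).
  replace (Cmult (Cmult _ _) (Cmult (RtoC (/ d a)) (zeta NI S d h n a))) with
    (Cdiv (Cmult (Cmult (RtoC (INR (Nc a O))) (e2pi (RtoC (1/INR n * (h a - c/24)))))
                 (Cmult (e2pi (RtoC (INR n * (-(c/24)) + 1/INR n * (h O - c/24))))
                        (Cmult (RtoC (/ Dtot NI d)) (zeta NI S d h n a))))
          (Cmult (RtoC (INR (Nc a O))) (RtoC (d a / Dtot NI d))))
    by (rewrite RtoC_inv, RtoC_div, RtoC_inv by lra; field;
        repeat split; apply RtoC_neq0; lra).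
  unfold Tren, Cdiv. apply (Clim_mult F).
  - apply (Clim_mult F).
    + exact (lim_fst _ _ (chi_leading a (1/INR n) Ha)).
    + exact (lim_snd _ _ (cusp_limit_minus a n Ha Hn)).
  - apply (Clim_inv F).
    + rewrite <- RtoC_mult. apply RtoC_neq0. apply Rgt_not_eq.
      apply Rmult_lt_0_compat; [lra | apply Rdiv_lt_0_compat; lra].
    + apply (Clim_mult F).
      * exact (lim_fst _ _ (upper_limit_imag_axis a Ha)).
      * exact (lim_snd _ _ (cusp_limit_zero a Ha)).
Qed.

(* Where the normalising characters do not vanish, Tren is T_a times a
   positive real; this holds eventually since their limits are positive. *)
Lemma Tren_positive_multiple (a n : nat) : (a < NI)%nat -> (1 <= n)%nat ->
  filter_prod (Rbar_locally p_infty) (at_right 0)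
    (fun p => exists q, 0 < q /\
       Tren a n (fst p) (snd p) = Cmult (Tfun chi a n (fst p) (snd p)) (RtoC q)).
Proof.
  intros Ha Hn. pose proof Hdata as (_&_&_&Hdpos&_&_&HNa&_).
  assert (HNa0 : 0 < INR (Nc a O)) by (apply lt_0_INR; specialize (HNa a Ha); lia).
  assert (HD := Dtot_pos). assert (Hda := Hdpos a Ha).
  apply (Filter_prod _ _ _
    (fun x => Cmult (chi a (0, x)) (RtoC (exp (2*PI*x*(h a - c/24)))) <> RtoC 0)
    (fun y => 0 < y /\ Cmult (chi a (0, y)) (RtoC (exp (2*PI*(/y)*(h O - c/24)))) <> RtoC 0)).
  - apply (Clim_nonzero _ _ _ (upper_limit_imag_axis a Ha)). apply RtoC_neq0; lra.
  - apply filter_and; [exists (mkposreal 1 Rlt_0_1); intros y _ Hy; exact Hy|].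
    apply (Clim_nonzero _ _ _ (cusp_limit_zero a Ha)).
    apply RtoC_neq0. apply Rgt_not_eq, Rdiv_lt_0_compat; lra.
  - intros x y Hx [Hy0 Hy]. simpl.
    set (k1 := exp (2*PI*x*(h a - c/24))) in *.
    set (k2 := exp (2*PI*(/(INR n ^ 2 * y))*(h O - c/24))).
    set (k3 := exp (2*PI*(/y)*(h O - c/24))) in *.
    assert (Hk1 : 0 < k1) by apply exp_pos.
    assert (Hk2 : 0 < k2) by apply exp_pos.
    assert (Hk3 : 0 < k3) by apply exp_pos.
    exists (k2 / k3). split; [apply Rdiv_lt_0_compat; lra|].
    assert (Hx0 : chi a (0, x) <> RtoC 0) by (intros E; apply Hx; rewrite E; ring).
    assert (Hy' : chi a (0, y) <> RtoC 0) by (intros E; apply Hy; rewrite E; ring).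
    unfold Tren, Tfun. fold k1 k2 k3. rewrite RtoC_div by lra.
    field. repeat split; auto; apply RtoC_neq0; lra.
Qed.

End Characters.

Theorem mainTheorem2 (NI : nat) (c : R) (h d : nat -> R) (S : nat -> nat -> C)
  (chi : nat -> C -> C) (Nc : nat -> nat -> nat) (a n : nat) :
  RCFT_data NI c h d S chi Nc ->
  (a < NI)%nat -> (1 <= n)%nat ->
  zeta NI S d h n a <> RtoC 0 ->
  filter_prod (Rbar_locally p_infty) (at_right 0)
    (fun p : R * R => Tfun chi a n (fst p) (snd p) <> RtoC 0) /\
  filterlim (fun p : R * R =>
      Cdiv (Tfun chi a n (fst p) (snd p)) (RtoC (Cmod (Tfun chi a n (fst p) (snd p)))))
    (filter_prod (Rbar_locally p_infty) (at_right 0))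
    (locally (Cmult (e2pi (RtoC (h a / INR n - (2 / INR n + INR n) * (c / 24))))
                    (Cdiv (zeta NI S d h n a) (RtoC (Cmod (zeta NI S d h n a)))))).
Proof.
  intros Hdata Ha Hn Hz.
  pose proof Hdata as (_&_&_&Hdpos&_).
  assert (Hda : 0 < / d a) by (apply Rinv_0_lt_compat, Hdpos, Ha).
  set (th := h a / INR n - (2 / INR n + INR n) * (c / 24)).
  (* T_a is eventually a positive multiple of Tren, whose limit is
     e(th) zeta / d_a; its phase is that of e(th) zeta. *)
  rewrite <- (phase_rotate_scale th (/ d a) _ Hda Hz).
  apply (phase_limit _ (fun p => Tren c h chi a n (fst p) (snd p))).
  - apply (Tren_limit NI c h d S chi Nc Hdata a n Ha Hn).
  - intros E. apply (f_equal Cmod) in E.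
    rewrite !Cmod_mult, Cmod_e2pi_R, Cmod_R, Rabs_pos_eq, Cmod_0 in E by lra.
    assert (0 < Cmod (zeta NI S d h n a)) by (apply Cmod_gt_0; exact Hz).
    nra.
  - apply (Tren_positive_multiple NI c h d S chi Nc Hdata a n Ha Hn).
Qed.
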